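(* The class of trivial extensions is Morita invariant: if $A/B$ is a trivial extension and $A/B$ is Morita equivalent to $A'/B'$, then $A'/B'$ is a trivial extension.
   Context: All rings have identity, subrings contain the identity, modules are unital; a ring extension $A/B$ means $B$ is a subring of $A$. $A/B$ is a trivial extension if there is a $B$-$B$-bimodule $S$ with $A=B\oplus S$ and multiplication $(b,s)(c,t)=(bc,bt+sc)$. For bimodules ${}_AX_{A'}$, ${}_AY_{A'}$, write $X\mid Y$ if $X$ is isomorphic to a direct summand of a finite direct sum of copies of $Y$, and $X\sim Y$ if $X\mid Y$ and $Y\mid X$. $\mathrm{End}^r({}_AM)$ denotes the ring of left $A$-endomorphisms of $M$ acting on the right. A bimodule ${}_AM_{A'}$ is a Morita module if ${}_AM\sim{}_AA$ and $\mathrm{End}^r({}_AM)=A'$. Ring extensions $A/B$ and $A'/B'$ are Morita equivalent if there exist Morita modules ${}_AM_{A'}$ and ${}_BN_{B'}$ with ${}_AA\otimes_BN_{B'}\cong{}_AM_{B'}$. A class $\mathscr C$ of ring extensions is Morita invariant if whenever $A/B\in\mathscr C$ and $A/B$ is Morita equivalent to $A'/B'$, then $A'/B'\in\mathscr C$. *)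

From HB Require Import structures.
From mathcomp Require Import all_boot all_order all_algebra.
Set Implicit Arguments. Unset Strict Implicit. Unset Printing Implicit Defensive.
Import GRing.Theory.
Local Open Scope ring_scope.

(* Rings are [pzRingType]s (associative, with identity; the zero ring allowed).
   A ring extension A/B is given by an injective (unital) ring morphism
   i : B -> A, identifying B with the subring i(B) of A. *)

Definition is_bimod (R S : pzRingType) (X : zmodType)
    (l : R -> X -> X) (r : X -> S -> X) : Prop :=
  (forall a x y, l a (x + y) = l a x + l a y) /\
  (forall a b x, l (a + b) x = l a x + l b x) /\
  (forall x, l 1 x = x) /\
  (forall a b x, l (a * b) x = l a (l b x)) /\
  (forall s x y, r (x + y) s = r x s + r y s) /\
  (forall s t x, r x (s + t) = r x s + r x t) /\
  (forall x, r x 1 = x) /\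
  (forall s t x, r x (s * t) = r (r x s) t) /\
  (forall a x s, l a (r x s) = r (l a x) s).

Definition lhom (R : pzRingType) (X Y : zmodType)
    (lX : R -> X -> X) (lY : R -> Y -> Y) (f : X -> Y) : Prop :=
  (forall x y, f (x + y) = f x + f y) /\ (forall a x, f (lX a x) = lY a (f x)).

(* _R X | _R Y : X is isomorphic to a direct summand of Y^n for some n, i.e.
   there is a split monomorphism X -> Y^n of left R-modules, written out
   componentwise: maps f_i : X -> Y, g_i : Y -> X with sum_i g_i o f_i = id. *)
Definition ldivides (R : pzRingType) (X Y : zmodType)
    (lX : R -> X -> X) (lY : R -> Y -> Y) : Prop :=
  exists (n : nat) (f : 'I_n -> X -> Y) (g : 'I_n -> Y -> X),
    (forall k, lhom lX lY (f k)) /\ (forall k, lhom lY lX (g k)) /\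
    (forall x, \sum_(k < n) g k (f k x) = x).

Definition lsim (R : pzRingType) (X Y : zmodType)
    (lX : R -> X -> X) (lY : R -> Y -> Y) : Prop :=
  ldivides lX lY /\ ldivides lY lX.

(* _R X_S is a Morita module: _R X ~ _R R, and End^r(_R X) = S, i.e. the
   canonical ring map S -> End^r(_R X), s |-> (x |-> x s), is bijective. *)
Definition morita_module (R S : pzRingType) (X : zmodType)
    (l : R -> X -> X) (r : X -> S -> X) : Prop :=
  is_bimod l r /\
  lsim l (fun a b : R => a * b) /\
  (forall f : X -> X, lhom l l f -> exists! s : S, forall x, f x = r x s).

(* _A A (x)_B N_{B'} is isomorphic to _A M_{B'}: there is a B-balanced
   biadditive map beta : A x N -> M making (M, beta) a tensor product of
   A_B and _B N (universal property), and such that the induced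
   isomorphism A (x)_B N -> M, a (x) n |-> beta a n, is A-B'-linear. *)
Definition tensor_iso (A B B' : pzRingType) (i : {rmorphism B -> A})
    (N : zmodType) (lN : B -> N -> N) (rN : N -> B' -> N)
    (M : zmodType) (lM : A -> M -> M) (rM : M -> B' -> M) : Prop :=
  exists beta : A -> N -> M,
    (forall a n1 n2, beta a (n1 + n2) = beta a n1 + beta a n2) /\
    (forall a1 a2 n, beta (a1 + a2) n = beta a1 n + beta a2 n) /\
    (forall a b n, beta (a * i b) n = beta a (lN b n)) /\
    (forall a1 a n, beta (a1 * a) n = lM a1 (beta a n)) /\
    (forall a n b', beta a (rN n b') = rM (beta a n) b') /\
    (forall (P : zmodType) (phi : A -> N -> P),
        (forall a n1 n2, phi a (n1 + n2) = phi a n1 + phi a n2) ->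
        (forall a1 a2 n, phi (a1 + a2) n = phi a1 n + phi a2 n) ->
        (forall a b n, phi (a * i b) n = phi a (lN b n)) ->
        exists! h : M -> P,
          (forall x y, h (x + y) = h x + h y) /\
          (forall a n, h (beta a n) = phi a n)).

Definition morita_equiv_ext (A B A' B' : pzRingType)
    (i : {rmorphism B -> A}) (i' : {rmorphism B' -> A'}) : Prop :=
  exists (M : zmodType) (lM : A -> M -> M) (rM : M -> A' -> M)
         (N : zmodType) (lN : B -> N -> N) (rN : N -> B' -> N),
    morita_module lM rM /\ morita_module lN rN /\
    tensor_iso i lN rN lM (fun x b' => rM x (i' b')).

(* A/B is a trivial extension: A = i(B) (+) S for a sub-i(B)-i(B)-bimodule S
   of A with S * S = 0 (so that (b,s)(c,t) = (bc, bt + sc)). *)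
Definition trivial_ext (A B : pzRingType) (i : {rmorphism B -> A}) : Prop :=
  exists S : A -> Prop,
    S 0 /\
    (forall x y, S x -> S y -> S (x - y)) /\
    (forall b x, S x -> S (i b * x)) /\
    (forall b x, S x -> S (x * i b)) /\
    (forall x y, S x -> S y -> x * y = 0) /\
    (forall a, exists! p : B * A, S p.2 /\ a = i p.1 + p.2).

Set Warnings "-notation-overridden,-ambiguous-paths".
From mathcomp Require Import all_boot all_order all_algebra.
From Stdlib Require Import ClassicalEpsilon.
Set Implicit Arguments. Unset Strict Implicit. Unset Printing Implicit Defensive.
Import GRing.Theory.
Local Open Scope ring_scope.

(* A/B is a trivial extension exactly when the inclusion has a B-B-bimodule
   retraction p : A -> B whose kernel squares to zero.  With M = A (x)_B N,
   such a p induces the projection pi : a (x) n |-> p(a) n of M onto N, split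
   by n |-> 1 (x) n.  Under A' = End(_A M) and B' = End(_B N), the map
   a' |-> pi((1 (x) -) a') is a retraction A' -> B'; its kernel S' is the
   required complement.  Since ker p annihilates ker pi, each element of S'
   kills ker pi, so a product of two elements of S' acts as 0 on M, hence
   is 0. *)

Section Additive.
Variables (X Y : zmodType) (f : X -> Y).
Hypothesis fD : {morph f : x y / x + y}.

Lemma morph_add0 : f 0 = 0.
Proof. by apply: (addrI (f 0)); rewrite -fD !addr0. Qed.

Lemma morph_addB x y : f (x - y) = f x - f y.
Proof. by apply: (addIr (f y)); rewrite -fD !subrK. Qed.

End Additive.

Section Bimodule.
Variables (R S : pzRingType) (X : zmodType) (l : R -> X -> X) (r : X -> S -> X).
Hypothesis bim : is_bimod l r.

Lemma actlDr a : {morph l a : x y / x + y}.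
Proof. by move=> *; have [H _] := bim; apply: H. Qed.

Lemma actlDl x : {morph l^~ x : a b / a + b}.
Proof. by move=> *; have [_ [H _]] := bim; apply: H. Qed.

Lemma actl1 x : l 1 x = x.
Proof. by move=> *; have [_ [_ [H _]]] := bim; apply: H. Qed.

Lemma actlA a b x : l (a * b) x = l a (l b x).
Proof. by move=> *; have [_ [_ [_ [H _]]]] := bim; apply: H. Qed.

Lemma actrDl s : {morph r^~ s : x y / x + y}.
Proof. by move=> *; have [_ [_ [_ [_ [H _]]]]] := bim; apply: H. Qed.

Lemma actrDr x : {morph r x : s t / s + t}.
Proof. by move=> *; have [_ [_ [_ [_ [_ [H _]]]]]] := bim; apply: H. Qed.

Lemma actrA x s t : r x (s * t) = r (r x s) t.
Proof. by move=> *; have [_ [_ [_ [_ [_ [_ [_ [H _]]]]]]]] := bim; apply: H. Qed.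

Lemma actlrA a x s : l a (r x s) = r (l a x) s.
Proof. by move=> *; have [_ [_ [_ [_ [_ [_ [_ [_ H]]]]]]]] := bim; apply: H. Qed.

Lemma actl0r a : l a 0 = 0.
Proof. exact: morph_add0 (actlDr a). Qed.

Lemma actl0l x : l 0 x = 0.
Proof. exact: morph_add0 (actlDl x). Qed.

Lemma actr0l s : r 0 s = 0.
Proof. exact: morph_add0 (actrDl s). Qed.

Lemma actr0r x : r x 0 = 0.
Proof. exact: morph_add0 (actrDr x). Qed.

Lemma actlBl x a b : l (a - b) x = l a x - l b x.
Proof. exact: morph_addB (actlDl x) a b. Qed.

Lemma actrBr x s t : r x (s - t) = r x s - r x t.
Proof. exact: morph_addB (actrDr x) s t. Qed.

End Bimodule.

Lemma morita_module_faithful (R S : pzRingType) (X : zmodType)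
    (l : R -> X -> X) (r : X -> S -> X) (s : S) :
  morita_module l r -> (forall x, r x s = 0) -> s = 0.
Proof.
move=> [bim [_ endX]] rs0.
have zero_lhom : lhom l l (fun _ => 0).
  by split=> [x y | a x]; rewrite ?addr0 ?(actl0r bim).
have [t [_ t_uniq]] := endX _ zero_lhom.
by rewrite -(t_uniq s (fun x => esym (rs0 x))) (t_uniq 0 (fun x => esym (actr0r bim x))).
Qed.

Section TrivialExtRetraction.
Variables (A B : pzRingType) (i : {rmorphism B -> A}) (S : A -> Prop).
Hypotheses (S0 : S 0) (SB : forall x y, S x -> S y -> S (x - y)).
Hypotheses (SMl : forall b x, S x -> S (i b * x)) (SMr : forall b x, S x -> S (x * i b)).
Hypothesis Sdec : forall a, exists! q : B * A, S q.2 /\ a = i q.1 + q.2.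

Definition bproj (a : A) : B :=
  (proj1_sig (constructive_indefinite_description _ (Sdec a))).1.

Lemma bproj_eq a b s : S s -> a = i b + s -> bproj a = b.
Proof.
rewrite /bproj; case: constructive_indefinite_description => q [_ q_uniq] /= Ss E.
by rewrite (q_uniq (b, s)).
Qed.

Lemma bproj_subS a : S (a - i (bproj a)).
Proof.
rewrite /bproj; case: constructive_indefinite_description => [[b s] [[Ss E] _]] /=.
by rewrite {1}E addrC addKr.
Qed.

Lemma bprojE a : a = i (bproj a) + (a - i (bproj a)).
Proof. by rewrite addrC subrK. Qed.

Lemma SD x y : S x -> S y -> S (x + y).
Proof. by move=> Sx Sy; have := SB Sx (SB S0 Sy); rewrite sub0r opprK. Qed.

Lemma bprojD : {morph bproj : x y / x + y}.
Proof.
move=> x y; apply: bproj_eq (SD (bproj_subS x) (bproj_subS y)) _.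
by rewrite rmorphD addrACA -!bprojE.
Qed.

Lemma bprojMl b a : bproj (i b * a) = b * bproj a.
Proof.
apply: bproj_eq (SMl b (bproj_subS a)) _.
by rewrite rmorphM -mulrDr -bprojE.
Qed.

Lemma bprojMr a b : bproj (a * i b) = bproj a * b.
Proof.
apply: bproj_eq (SMr b (bproj_subS a)) _.
by rewrite rmorphM -mulrDl -bprojE.
Qed.

Lemma bproj1 : bproj 1 = 1.
Proof. by apply: bproj_eq S0 _; rewrite rmorph1 addr0. Qed.

Lemma bproj_eq0 x : bproj x = 0 -> S x.
Proof. by move=> px0; have := bproj_subS x; rewrite px0 rmorph0 subr0. Qed.

End TrivialExtRetraction.

Lemma trivial_ext_retraction (A B : pzRingType) (i : {rmorphism B -> A}) :
  trivial_ext i ->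
  exists p : A -> B, [/\ {morph p : x y / x + y},
    forall b a, p (i b * a) = b * p a, forall a b, p (a * i b) = p a * b,
    p 1 = 1 & forall x y, p x = 0 -> p y = 0 -> x * y = 0].
Proof.
move=> [S [S0 [SB [SMl [SMr [SS Sdec]]]]]].
exists (bproj Sdec); split.
- exact: bprojD.
- exact: bprojMl.
- exact: bprojMr.
- exact: bproj1.
- by move=> x y /bproj_eq0 Sx /bproj_eq0 Sy; exact: SS Sx Sy.
Qed.

Section Transport.
Variables (A B : pzRingType) (i : {rmorphism B -> A}).
Variables (N M : zmodType) (lN : B -> N -> N) (beta : A -> N -> M).
Hypothesis betaDr : forall a n1 n2, beta a (n1 + n2) = beta a n1 + beta a n2.
Hypothesis betaDl : forall a1 a2 n, beta (a1 + a2) n = beta a1 n + beta a2 n.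
Hypothesis beta_balanced : forall a b n, beta (a * i b) n = beta a (lN b n).
Hypothesis beta_universal : forall (P : zmodType) (phi : A -> N -> P),
  (forall a n1 n2, phi a (n1 + n2) = phi a n1 + phi a n2) ->
  (forall a1 a2 n, phi (a1 + a2) n = phi a1 n + phi a2 n) ->
  (forall a b n, phi (a * i b) n = phi a (lN b n)) ->
  exists! h : M -> P,
    (forall x y, h (x + y) = h x + h y) /\ (forall a n, h (beta a n) = phi a n).

Lemma tensor_morph_eq (P : zmodType) (h1 h2 : M -> P) :
  {morph h1 : x y / x + y} -> {morph h2 : x y / x + y} ->
  (forall a n, h1 (beta a n) = h2 (beta a n)) -> h1 =1 h2.
Proof.
move=> h1D h2D h12.
have [||| h [_ h_uniq]] := @beta_universal P (fun a n => h1 (beta a n)).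
- by move=> a n1 n2; rewrite betaDr h1D.
- by move=> a1 a2 n; rewrite betaDl h1D.
- by move=> a b n; rewrite beta_balanced.
move=> m; rewrite -(h_uniq h1 (conj h1D (fun _ _ => erefl))).
by rewrite (h_uniq h2 (conj h2D (fun a n => esym (h12 a n)))).
Qed.

Lemma tensor_morph_eq0 (P : zmodType) (h : M -> P) :
  {morph h : x y / x + y} -> (forall a n, h (beta a n) = 0) -> forall m, h m = 0.
Proof.
move=> hD h0; apply: (tensor_morph_eq (h2 := fun _ => 0)) => // x y.
by rewrite addr0.
Qed.

Variables (A' B' : pzRingType) (i' : {rmorphism B' -> A'}).
Variables (rN : N -> B' -> N) (lM : A -> M -> M) (rM : M -> A' -> M).
Hypotheses (moritaM : morita_module lM rM) (moritaN : morita_module lN rN).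
Hypothesis beta_actl : forall a1 a n, beta (a1 * a) n = lM a1 (beta a n).
Hypothesis beta_actr : forall a n b', beta a (rN n b') = rM (beta a n) (i' b').

Let bimM : is_bimod lM rM := proj1 moritaM.
Let bimN : is_bimod lN rN := proj1 moritaN.

Variable p : A -> B.
Hypotheses (pD : {morph p : x y / x + y}) (p1 : p 1 = 1).
Hypotheses (pMl : forall b a, p (i b * a) = b * p a) (pMr : forall a b, p (a * i b) = p a * b).
Hypothesis p_ker_mul0 : forall x y, p x = 0 -> p y = 0 -> x * y = 0.

Lemma p_sub_ip a : p (a - i (p a)) = 0.
Proof. by rewrite (morph_addB pD) -[i _]mul1r pMr p1 mul1r subrr. Qed.

Lemma exists_tensor_proj :
  exists pi : M -> N, {morph pi : x y / x + y} /\ forall a n, pi (beta a n) = lN (p a) n.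
Proof.
have [||| pi [[piD pi_beta] _]] := @beta_universal N (fun a n => lN (p a) n).
- by move=> a n1 n2; rewrite (actlDr bimN).
- by move=> a1 a2 n; rewrite pD (actlDl bimN).
- by move=> a b n; rewrite pMr (actlA bimN).
by exists pi.
Qed.

Section Projection.
Variable pi : M -> N.
Hypotheses (piD : {morph pi : x y / x + y}) (pi_beta : forall a n, pi (beta a n) = lN (p a) n).

Lemma beta_1 a n : beta a n = lM a (beta 1 n).
Proof. by rewrite -beta_actl mulr1. Qed.

Lemma pi_beta1 n : pi (beta 1 n) = n.
Proof. by rewrite pi_beta p1 (actl1 bimN). Qed.

Lemma beta1_actl b n : beta 1 (lN b n) = lM (i b) (beta 1 n).
Proof. by rewrite -beta_balanced -beta_actl mul1r mulr1. Qed.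

Lemma pi_actl b m : pi (lM (i b) m) = lN b (pi m).
Proof.
apply: (tensor_morph_eq (h1 := fun m => pi (lM (i b) m)) (h2 := fun m => lN b (pi m))).
- by move=> x y /=; rewrite (actlDr bimM) piD.
- by move=> x y /=; rewrite piD (actlDr bimN).
- by move=> a n /=; rewrite -beta_actl !pi_beta pMl (actlA bimN).
Qed.

Lemma pi_actr m b' : pi (rM m (i' b')) = rN (pi m) b'.
Proof.
apply: (tensor_morph_eq (h1 := fun m => pi (rM m (i' b'))) (h2 := fun m => rN (pi m) b')).
- by move=> x y /=; rewrite (actrDl bimM) piD.
- by move=> x y /=; rewrite piD (actrDl bimN).
- by move=> a n /=; rewrite -beta_actr !pi_beta (actlrA bimN).
Qed.

Lemma pi_beta1_i' n b' : pi (rM (beta 1 n) (i' b')) = rN n b'.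
Proof. by rewrite pi_actr pi_beta1. Qed.

Lemma beta_sub_pi a n : beta a n - beta 1 (pi (beta a n)) = lM (a - i (p a)) (beta 1 n).
Proof. by rewrite pi_beta beta1_actl (actlBl bimM) -!beta_1. Qed.

Lemma ker_p_actl_ker_pi s v : p s = 0 -> pi v = 0 -> lM s v = 0.
Proof.
move=> ps0 piv0.
suff /(_ v) : forall m, lM s (m - beta 1 (pi m)) = 0.
  by rewrite piv0 (morph_add0 (betaDr 1)) subr0.
apply: (tensor_morph_eq0 (h := fun m => lM s (m - beta 1 (pi m)))) => [x y | a n] /=.
  by rewrite piD betaDr opprD addrACA; apply: (actlDr bimM).
by rewrite beta_sub_pi -(actlA bimM) p_ker_mul0 ?p_sub_ip // (actl0l bimM).
Qed.

Definition S' (x : A') : Prop := forall n, pi (rM (beta 1 n) x) = 0.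

Lemma S'_actr_ker_pi y v : S' y -> pi v = 0 -> rM v y = 0.
Proof.
move=> Sy piv0.
suff /(_ v) : forall m, rM (m - beta 1 (pi m)) y = 0.
  by rewrite piv0 (morph_add0 (betaDr 1)) subr0.
apply: (tensor_morph_eq0 (h := fun m => rM (m - beta 1 (pi m)) y)) => [x z | a n] /=.
  by rewrite piD betaDr opprD addrACA; apply: (actrDl bimM).
by rewrite beta_sub_pi -(actlrA bimM) ker_p_actl_ker_pi ?p_sub_ip // (actl0r bimM).
Qed.

Lemma S'_mul0 x y : S' x -> S' y -> x * y = 0.
Proof.
move=> Sx Sy; apply: (morita_module_faithful moritaM) => m.
rewrite (actrA bimM).
apply: (tensor_morph_eq0 (h := fun m => rM (rM m x) y)) => [m1 m2 | a n] /=.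
  by rewrite !(actrDl bimM).
by rewrite beta_1 -!(actlrA bimM) (S'_actr_ker_pi Sy (Sx n)) (actl0r bimM).
Qed.

Lemma S'_decomposition a' : exists! q : B' * A', S' q.2 /\ a' = i' q.1 + q.2.
Proof.
have f_lhom : lhom lN lN (fun n => pi (rM (beta 1 n) a')).
  split=> [n1 n2 | b n]; first by rewrite betaDr (actrDl bimM) piD.
  by rewrite beta1_actl -(actlrA bimM) pi_actl.
have [b' [b'E b'_uniq]] := moritaN.2.2 _ f_lhom.
exists (b', a' - i' b'); split=> [|[c s] [/= Ss E]].
  split=> [n /=|]; last by rewrite /= addrC subrK.
  by rewrite (actrBr bimM) (morph_addB piD) b'E pi_beta1_i' subrr.
have -> : b' = c.
  by apply: b'_uniq => n; rewrite E (actrDr bimM) piD pi_beta1_i' Ss addr0.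
by rewrite E addrC addKr.
Qed.

Lemma trivial_ext_S' : trivial_ext i'.
Proof.
exists S'; split; [|split; [|split; [|split; [|split]]]].
- by move=> n; rewrite (actr0r bimM) (morph_add0 piD).
- by move=> x y Sx Sy n; rewrite (actrBr bimM) (morph_addB piD) Sx Sy subr0.
- by move=> b x Sx n; rewrite (actrA bimM) -beta_actr Sx.
- by move=> b x Sx n; rewrite (actrA bimM) pi_actr Sx (actr0l bimN).
- exact: S'_mul0.
- exact: S'_decomposition.
Qed.

End Projection.

Lemma trivial_ext_transport : trivial_ext i'.
Proof. by have [pi [piD pi_beta]] := exists_tensor_proj; apply: trivial_ext_S' piD pi_beta. Qed.

End Transport.

Theorem proposition3p1 (A B A' B' : pzRingType)
    (i : {rmorphism B -> A}) (i' : {rmorphism B' -> A'}) :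
  injective i -> injective i' ->
  trivial_ext i -> morita_equiv_ext i i' -> trivial_ext i'.
Proof.
move=> _ _ /trivial_ext_retraction [p [pD pMl pMr p1 p_ker_mul0]].
move=> [M [lM [rM [N [lN [rN [moritaM [moritaN [beta
  [betaDr [betaDl [beta_balanced [beta_actl [beta_actr beta_universal]]]]]]]]]]]]]].
exact: (trivial_ext_transport betaDr betaDl beta_balanced beta_universal
  moritaM moritaN beta_actl beta_actr pD p1 pMl pMr p_ker_mul0).
Qed.
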